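(* Let $X=(x_1\ \cdots\ x_{n+1})$ be a real $n\times(n+1)$ matrix all of whose maximal ($n\times n$) minors have the same sign. Let $X'$ be obtained from $X$ by switching two columns $x_i,x_j$ whose indices $i,j$ are both even or both odd. Then every maximal minor of $X'$ has the opposite sign of the corresponding maximal minor of $X$. Here the maximal minor for a column index set $I$ is taken with columns in increasing order of index. *)

From mathcomp Require Import all_boot all_order all_algebra.
Set Implicit Arguments. Unset Strict Implicit. Unset Printing Implicit Defensive.
Import Order.TTheory GRing.Theory Num.Theory.
Local Open Scope ring_scope.

(* The maximal minor of an n x (n+1) matrix X obtained by deleting column k,
   keeping the remaining columns in increasing order of index
   (lift k : 'I_n -> 'I_n.+1 is the increasing enumeration of the other
   column indices). *)
Definition maxminor (R : comNzRingType) (n : nat) (X : 'M[R]_(n, n.+1))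
  (k : 'I_n.+1) : R := \det (colsub (lift k) X).

From mathcomp Require Import all_boot all_order all_algebra.
From mathcomp Require Import fingroup perm.
Set Implicit Arguments. Unset Strict Implicit. Unset Printing Implicit Defensive.
Import Order.TTheory GRing.Theory Num.Theory.
Local Open Scope ring_scope.

(* Border X with the unit row vector e_c on top: by Laplace expansion along
   that row its determinant is (-1)^c times the maximal minor of X at c.
   Swapping columns i and j of the bordered matrix negates its determinant and
   turns e_(tperm i j k) into e_k, so the minor of xcol i j X at k is minus the
   minor of X at tperm i j k, up to the signs (-1)^k and (-1)^(tperm i j k),
   which agree when i and j have the same parity. *)

(* Variants of col_mxEu and col_mxEd at type 'M_(n.+1, p), where the bordered
   matrices below live: the originals do not rewrite there, as 1 + n is not
   syntactically n.+1. *)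
Lemma col_mx_row0 (T : Type) n p (u : 'rV[T]_p) (X : 'M[T]_(n, p)) c :
  (col_mx u X : 'M_(n.+1, p)) ord0 c = u 0 c.
Proof.
by rewrite mxE; case: splitP => [i0 _|i' /eqP]; rewrite ?ord1 ?add1n.
Qed.

Lemma col_mx_row_lift0 (T : Type) n p (u : 'rV[T]_p) (X : 'M[T]_(n, p)) r c :
  (col_mx u X : 'M_(n.+1, p)) (lift ord0 r) c = X r c.
Proof.
rewrite mxE; case: splitP => [i0|i'] /eqP; rewrite ?ord1 ?add1n //=.
by rewrite eqSS => /eqP/val_inj ->.
Qed.

Lemma det_xcol (R : comNzRingType) n (A : 'M[R]_n) i j :
  i != j -> \det (xcol i j A) = - \det A.
Proof.
by move=> neq_ij; rewrite xcolE det_mulmx det_perm odd_tperm neq_ij mulrN1.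
Qed.

Lemma xcol_col_mx (R : pzSemiRingType) m1 m2 n (A : 'M[R]_(m1, n))
    (B : 'M[R]_(m2, n)) i j :
  xcol i j (col_mx A B) = col_mx (xcol i j A) (xcol i j B).
Proof. by rewrite !xcolE mul_col_mx. Qed.

Section MaximalMinors.

Variables (R : comNzRingType) (n : nat).

Lemma expand_det_col_mx (u : 'rV[R]_n.+1) (X : 'M[R]_(n, n.+1)) :
  \det (col_mx u X : 'M_n.+1) = \sum_k u 0 k * ((-1) ^+ k * maxminor X k).
Proof.
rewrite (expand_det_row _ ord0); apply: eq_bigr => k _.
rewrite /cofactor /maxminor add0n col_mx_row0.
congr (_ * (_ * \det _)); apply/matrixP => r c.
by rewrite [row' _ _ _ _]mxE [col' _ _ _ _]mxE col_mx_row_lift0 mxE.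
Qed.

Lemma det_col_mx_delta (X : 'M[R]_(n, n.+1)) c :
  \det (col_mx (delta_mx (0 : 'I_1) c) X : 'M_n.+1) = (-1) ^+ c * maxminor X c.
Proof.
rewrite expand_det_col_mx (bigD1 c) //= big1 ?addr0 => [|k kc].
  by rewrite mxE !eqxx mul1r.
by rewrite mxE (negbTE kc) andbF mul0r.
Qed.

Lemma xcol_delta_mx i j c :
  xcol i j (delta_mx 0 (tperm i j c)) = delta_mx 0 c :> 'rV[R]_n.+1.
Proof. by apply/matrixP => r k; rewrite !mxE (inj_eq perm_inj). Qed.

Lemma maxminor_xcol (X : 'M[R]_(n, n.+1)) (i j k : 'I_n.+1) : i != j ->
  (-1) ^+ k * maxminor (xcol i j X) k
    = - ((-1) ^+ tperm i j k * maxminor X (tperm i j k)).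
Proof.
move=> neq_ij; rewrite -!det_col_mx_delta -(xcol_delta_mx i j k).
by rewrite -xcol_col_mx det_xcol.
Qed.

End MaximalMinors.

Lemma odd_tperm_same_parity n (i j k : 'I_n) :
  odd i = odd j -> odd (tperm i j k) = odd k.
Proof. by move=> oij; case: tpermP => [->|->|]; rewrite ?oij. Qed.

Lemma maxminor_xcol_same_parity (R : comNzRingType) n (X : 'M[R]_(n, n.+1))
    (i j k : 'I_n.+1) :
  i != j -> odd i = odd j ->
  maxminor (xcol i j X) k = - maxminor X (tperm i j k).
Proof.
move=> neq_ij oij; have := maxminor_xcol X k neq_ij.
have -> : (-1) ^+ tperm i j k = (-1) ^+ k :> R.
  by rewrite -signr_odd odd_tperm_same_parity // signr_odd.
by rewrite -mulrN; apply: lreg_sign.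
Qed.

Theorem lemma3p9 (R : realFieldType) (n : nat) (X : 'M[R]_(n, n.+1))
  (i j : 'I_n.+1) :
  (forall k l : 'I_n.+1, 0 < maxminor X k * maxminor X l) ->
  i != j -> odd i = odd j ->
  forall k : 'I_n.+1, maxminor (xcol i j X) k * maxminor X k < 0.
Proof.
move=> same_sign neq_ij oij k.
by rewrite maxminor_xcol_same_parity // mulNr oppr_lt0.
Qed.
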